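(* Let $\mathcal{M}$ be a minimally $k$-level matroid and $F$ a $k$-level flacet of $\mathcal{M}$. Then $\operatorname{rk}(F)=k-1$.
   Context: Levelness of a matroid $\mathcal{M}=(E,\mathcal{B})$: the least $k$ such that every facet-defining affine function takes at most $k$ distinct values on $V_{\mathcal{M}}=\{\mathbf{1}_B:B\in\mathcal{B}\}$ (facets are inclusion-maximal faces $\{v\in V_{\mathcal{M}}:\ell(v)=0\}\neq V_{\mathcal{M}}$ for affine $\ell\ge0$ on $V_{\mathcal{M}}$). $\mathcal{M}$ is minimally $k$-level if its levelness is $k$ and every proper minor has strictly smaller levelness. A flacet is a flat $\emptyset\neq S\subsetneq E$ such that the restriction $\mathcal{M}|_S$ and contraction $\mathcal{M}/S$ are connected; a flacet $F$ is $k$-level if $\ell_F(x)=\sum_{e\in F}x_e$ takes exactly $k$ distinct values on $V_{\mathcal{M}}$. *)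

From HB Require Import structures.
From mathcomp Require Import all_boot all_order all_algebra.
From mathcomp Require Import reals.
Set Implicit Arguments. Unset Strict Implicit. Unset Printing Implicit Defensive.
Import Order.TTheory GRing.Theory Num.Theory.

Section Matroids.
Variable T : finType.
Implicit Types (E C D S X Y F : {set T}) (B : {set {set T}}).

Definition is_matroid E B : Prop :=
  [/\ B != set0,
      forall X, X \in B -> X \subset E &
      forall B1 B2 : {set T}, B1 \in B -> B2 \in B -> forall x, x \in B1 :\: B2 ->
        exists2 y, y \in B2 :\: B1 & (B1 :\ x) :|: [set y] \in B].

Definition mrank B X : nat := \max_(Y in B) #|Y :&: X|.

(* ground set and bases of the minor M / C \ D (C, D disjoint subsets of E):
   X is a basis iff X ⊆ E-(C∪D), r(X ∪ C) = |X| + r(C) and r(E - D) = |X| + r(C). *)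
Definition minor_ground E C D : {set T} := E :\: (C :|: D).
Definition minor_bases E B C D : {set {set T}} :=
  [set X : {set T} | [&& X \subset minor_ground E C D,
                         mrank B (X :|: C) == #|X| + mrank B C &
                         mrank B (E :\: D) == #|X| + mrank B C]].

Definition is_minor_pair E C D : Prop :=
  [/\ C \subset E, D \subset E & [disjoint C & D]].
Definition is_proper_minor_pair E C D : Prop :=
  is_minor_pair E C D /\ C :|: D != set0.

Definition restr_ground E S := minor_ground E set0 (E :\: S).
Definition restr_bases E B S := minor_bases E B set0 (E :\: S).
Definition contr_ground E S := minor_ground E S set0.
Definition contr_bases E B S := minor_bases E B S set0.

Definition indep B X : bool := [exists Y in B, X \subset Y].
Definition circuit E B X : bool :=
  [&& X \subset E, ~~ indep B X & [forall Y : {set T}, (Y \proper X) ==> indep B Y]].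
Definition connected E B : Prop :=
  forall e f, e \in E -> f \in E -> e != f ->
    exists X, circuit E B X /\ e \in X /\ f \in X.

Definition flat E B S : Prop :=
  S \subset E /\ forall e, e \in E :\: S -> mrank B S < mrank B (e |: S).
Definition flacet E B S : Prop :=
  [/\ flat E B S, S != set0, S \proper E,
      connected (restr_ground E S) (restr_bases E B S) &
      connected (contr_ground E S) (contr_bases E B S)].

(* number of distinct values of l_F(x) = sum_{e in F} x_e on V_M *)
Definition flacet_nvalues B F : nat := size (undup [seq #|X :&: F| | X <- enum B]).

(* Affine functions l(x) = sum_e a_e x_e + b on R^E, evaluated at the
   indicator vector 1_X of a basis X (⊆ E). *)
Variable R : realType.
Definition aff_eval (a : T -> R) (b : R) X : R := (\sum_(e in X) a e + b)%R.
Definition aff_nonneg B a b : Prop := forall X, X \in B -> (0 <= aff_eval a b X)%R.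
(* zero set of l on V_M, identified with a set of bases *)
Definition zero_face B a b : {set {set T}} :=
  [set X in B | aff_eval a b X == 0%R].
Definition is_face B (G : {set {set T}}) : Prop :=
  exists a b, aff_nonneg B a b /\ G = zero_face B a b.
Definition is_facet B (G : {set {set T}}) : Prop :=
  [/\ is_face B G, G != B &
      forall H, is_face B H -> H != B -> G \subset H -> H = G].
Definition facet_defining B a b : Prop :=
  aff_nonneg B a b /\ is_facet B (zero_face B a b).
Definition aff_nvalues B a b : nat := size (undup [seq aff_eval a b X | X <- enum B]).
Definition level_bound B (k : nat) : Prop :=
  forall a b, facet_defining B a b -> aff_nvalues B a b <= k.
Definition levelness B (k : nat) : Prop :=
  level_bound B k /\ forall j, j < k -> ~ level_bound B j.
Definition minimally_level E B (k : nat) : Prop :=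
  levelness B k /\
  forall C D, is_proper_minor_pair E C D ->
    forall j, levelness (minor_bases E B C D) j -> j < k.
End Matroids.

From HB Require Import structures.
From mathcomp Require Import all_boot all_order all_algebra.
From mathcomp Require Import reals.
From Stdlib Require Import Classical.
From mathcomp Require Import zify ring.
Set Implicit Arguments. Unset Strict Implicit. Unset Printing Implicit Defensive.
Import Order.TTheory GRing.Theory Num.Theory.

(* Let m be the least value of |X :&: F| over the bases X.  By basis exchange
   this count takes every value between m and rk F, so k = rk F - m + 1, and
   contracting all of E shows k >= 2, i.e. m < rk F; it remains to see m = 0.
   If m > 0, pick f in F on a basis realising m.  If the circuits of M|F
   avoiding f connect F :\ f, then |X :&: (F :\ f)| <= rk F defines a facet of
   the deletion M \ f; otherwise, the complement of a disconnected graph being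
   connected, the circuits through f connect F :\ f and
   |X :&: (F :\ f)| <= rk F - 1 defines a facet of the contraction M / f.
   Either inequality still takes k values, contradicting minimality.
   Facetness: an affine function vanishing on the face is constant along the
   basis exchanges staying in the face, hence (by the connectivity of M|F and
   M/F) constant on F :\ f and on E :\: F, so it is a multiple of the
   inequality. *)

Section Bases.
Variables (T : finType) (E : {set T}) (B : {set {set T}}).
Hypothesis HB : is_matroid E B.

Definition swap (X : {set T}) x y := X :\ x :|: [set y].

Lemma in_swap X x y z : (z \in swap X x y) = (z == y) || ((z != x) && (z \in X)).
Proof. by rewrite /swap !inE orbC. Qed.

Lemma swap_setD1 (X : {set T}) x y f : x != f -> y != f -> swap X x y :\ f = swap (X :\ f) x y.
Proof.
move=> xf yf; apply/setP => z; rewrite !inE.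
by case: (eqVneq z f) => [->|//]; rewrite [f == y]eq_sym (negbTE yf) /= andbF.
Qed.

Lemma card_swapI (X S : {set T}) x y : x \in X -> y \notin X ->
  #|swap X x y :&: S| + (x \in S) = #|X :&: S| + (y \in S).
Proof.
move=> xX yX; rewrite (cardsD1 y (swap X x y :&: S)) (cardsD1 x (X :&: S)).
have -> : (swap X x y :&: S) :\ y = (X :&: S) :\ x.
  apply/setP => z; rewrite /swap !inE.
  case: (eqVneq z y) => [->|zy] /=; first by rewrite (negbTE yX) !andbF.
  by rewrite orbF andbA.
rewrite /swap !inE eqxx xX orbT /=; lia.
Qed.

Lemma card_swap (X : {set T}) x y : x \in X -> y \notin X -> #|swap X x y| = #|X|.
Proof. by move=> xX yX; have := card_swapI [set: T] xX yX; rewrite !setIT !inE; lia. Qed.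

Lemma basis_exchange B1 B2 x : B1 \in B -> B2 \in B -> x \in B1 -> x \notin B2 ->
  exists2 y, (y \in B2) && (y \notin B1) & swap B1 x y \in B.
Proof.
case: HB => _ _ exch h1 h2 xB1 xB2.
have [|y] := exch _ _ h1 h2 x; first by rewrite inE xB1 xB2.
by rewrite inE => /andP[yB2 yB1] hs; exists y; rewrite ?yB2 ?yB1.
Qed.

Lemma basis_sub_ground X : X \in B -> X \subset E.
Proof. by case: HB => _ + _; apply. Qed.

Lemma basis_subset_eq X Y : X \in B -> Y \in B -> X \subset Y -> X = Y.
Proof.
move=> hX hY sXY; apply/eqP; rewrite eqEsubset sXY /=.
apply/subsetP => y yY; apply/negPn/negP => yX.
have [z /andP[zX zY] _] := basis_exchange hY hX yY yX.
by rewrite (subsetP sXY z zX) in zY.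
Qed.

Lemma card_bases_eq X Y : X \in B -> Y \in B -> #|X| = #|Y|.
Proof.
move=> hX hY; move: {2}#|X :\: Y| (erefl #|X :\: Y|) => d.
elim: d X hX => [|d IH] X hX hd.
  have sXY : X \subset Y by rewrite -setD_eq0 -cards_eq0 hd.
  by rewrite (basis_subset_eq hX hY sXY).
have /card_gt0P [x] : 0 < #|X :\: Y| by rewrite hd.
rewrite inE => /andP[xY xX].
have [y /andP[yY yX] hX'] := basis_exchange hX hY xX xY.
rewrite -(card_swap xX yX); apply: IH => //.
have := card_swapI (~: Y) xX yX; rewrite !inE xY yY /= !setDE in hd *; lia.
Qed.

Lemma basis_augment_inside X Y S : X \in B -> Y \in B -> #|X :&: S| < #|Y :&: S| ->
  {subset Y :\: X <= S} ->
  exists x y, [/\ x \in X, x \notin S, y \in Y :&: S, y \notin X & swap X x y \in B].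
Proof.
move=> hX hY hlt YXS.
have [x /andP[/andP[xX xY] xS]] : exists x, (x \in X) && (x \notin Y) && (x \notin S).
  apply/existsP; apply: contraTT hlt => /existsPn XYS; rewrite -leqNgt.
  have eX : (X :&: S) :\: Y = X :\: Y.
    apply/setP => z; rewrite !inE; have := XYS z.
    by case: (z \in X); case: (z \in Y); case: (z \in S).
  have eY : (Y :&: S) :\: X = Y :\: X.
    apply/setP => z; rewrite !inE; have := YXS z; rewrite inE.
    by case: (z \in X); case: (z \in Y); case: (z \in S) => //= ->.
  have eXY : X :&: S :&: Y = Y :&: S :&: X.
    by apply/setP => z; rewrite !inE; case: (z \in X); case: (z \in Y); case: (z \in S).
  have := cardsID Y (X :&: S); have := cardsID X (Y :&: S).
  have := cardsID Y X; have := cardsID X Y; have := card_bases_eq hX hY.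
  rewrite eX eY eXY setIC; lia.
have [y /andP[yY yX] hs] := basis_exchange hX hY xX xY.
by exists x, y; split => //; rewrite inE yY YXS // inE yY yX.
Qed.

Lemma basis_augment X Y S : X \in B -> Y \in B -> #|X :&: S| < #|Y :&: S| ->
  exists x y, [/\ x \in X, x \notin S, y \in Y :&: S, y \notin X & swap X x y \in B].
Proof.
move=> hX; move: {2}#|Y :\: X| (leqnn #|Y :\: X|) => d.
elim: d Y => [|d IH] Y hd hY hlt.
  apply: basis_augment_inside => // y.
  by move: hd; rewrite leqn0 cards_eq0 => /eqP ->; rewrite inE.
have [/existsP [y0 /andP[/andP[y0Y y0X] y0S]]|/existsPn YXS] :=
  boolP [exists y0, (y0 \in Y) && (y0 \notin X) && (y0 \notin S)]; last first.
  apply: basis_augment_inside => // y; rewrite inE => /andP[yX yY].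
  by have := YXS y; rewrite yY yX /= negbK.
have [x0 /andP[x0X x0Y] hY'] := basis_exchange hY hX y0Y y0X.
have cS := card_swapI S y0Y x0Y; rewrite (negbTE y0S) in cS.
have cX := card_swapI (~: X) y0Y x0Y; rewrite !inE y0X x0X /= in cX.
have [||x [y [xX xS /setIP[yY' yS] yX hs]]] := IH (swap Y y0 x0) _ hY'.
- by rewrite setDE in hd; rewrite setDE; lia.
- lia.
exists x, y; split => //; rewrite inE yS andbT.
by move: yY'; rewrite in_swap; case: eqP => [e|_ /andP[]//]; rewrite e x0X in yX.
Qed.

Lemma basis_interpolate X Y S v : X \in B -> Y \in B ->
  #|X :&: S| <= v <= #|Y :&: S| ->
  exists Z, [/\ Z \in B, X :&: S \subset Z, Z :\: S \subset X,
               Z \subset X :|: Y & #|Z :&: S| = v].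
Proof.
move=> hX hY /andP[h1 h2]; move: {2}(v - #|X :&: S|) (erefl (v - #|X :&: S|)) => d.
elim: d X hX h1 => [|d IH] X hX h1 hd.
  by exists X; split; rewrite ?subsetIl ?subDset ?subsetUl ?subsetUr //; lia.
have [|x [y [xX xS /setIP[yY yS] yX hs]]] := basis_augment hX hY (S := S); first lia.
have c := card_swapI S xX yX; rewrite (negbTE xS) yS in c.
have [||Z [hZ s1 s2 s3 cZ]] := IH (swap X x y) hs; [lia|lia|].
exists Z; split => //; apply/subsetP => z.
- move=> zXS; apply: (subsetP s1); move: zXS; rewrite !inE => /andP[zX zS].
  by rewrite zX zS !andbT; case: (eqVneq z x) => [zx|//]; rewrite -zx zS in xS.
- move=> zZS; have := subsetP s2 z zZS; rewrite !inE => /orP[/andP[_ //]|/eqP zy].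
  by move: zZS; rewrite !inE zy yS.
- by move/(subsetP s3); rewrite !inE => /orP[/orP[/andP[_ ->]|/eqP->]|->]; rewrite ?yY ?orbT.
Qed.
End Bases.

Section Rank.
Variables (T : finType) (E : {set T}) (B : {set {set T}}).
Hypothesis HB : is_matroid E B.
Variable n : nat.
Hypothesis card_basis : forall X, X \in B -> #|X| = n.

Lemma basis_exists : exists X, X \in B.
Proof. by case: HB => /set0Pn. Qed.

Lemma mrank_ge_basis (Y S : {set T}) : Y \in B -> #|Y :&: S| <= mrank B S.
Proof. by move=> hY; apply: (@leq_bigmax_cond _ (mem B) (fun Y => #|Y :&: S|) _ hY). Qed.

Lemma mrank_attained (S : {set T}) : exists2 Y, Y \in B & mrank B S = #|Y :&: S|.
Proof.
have [X hX] := basis_exists.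
have /(eq_bigmax_cond (fun Y => #|Y :&: S|)) [Y hY eY] : 0 < #|B|.
  by apply/card_gt0P; exists X.
by exists Y.
Qed.

Lemma mrank_le_card (S : {set T}) : mrank B S <= #|S|.
Proof. by apply/bigmax_leqP => Y _; apply/subset_leq_card/subsetIr. Qed.

Lemma mrank_le_rank (S : {set T}) : mrank B S <= n.
Proof. by apply/bigmax_leqP => Y hY; rewrite -(card_basis hY); apply/subset_leq_card/subsetIl. Qed.

Lemma mrank_set0 : mrank B set0 = 0.
Proof. by apply/eqP; rewrite -leqn0 -(cards0 T) mrank_le_card. Qed.

Lemma mrank_basis (X : {set T}) : X \in B -> mrank B X = n.
Proof.
move=> hX; apply/eqP; rewrite eqn_leq mrank_le_rank /=.
by have := mrank_ge_basis X hX; rewrite setIid (card_basis hX).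
Qed.

Lemma mrank_ground : mrank B E = n.
Proof.
have [X hX] := basis_exists; apply/eqP; rewrite eqn_leq mrank_le_rank /=.
by have := mrank_ge_basis E hX; rewrite (setIidPl (basis_sub_ground HB hX)) (card_basis hX).
Qed.

Lemma full_rank_sub_basis (S : {set T}) : #|S| <= mrank B S -> exists2 Y, Y \in B & S \subset Y.
Proof.
move=> hS; have [Y hY eY] := mrank_attained S; exists Y => //.
have /eqP <- : Y :&: S == S by rewrite eqEcard subsetIr -eY hS.
exact: subsetIl.
Qed.

End Rank.

Definition max_bases T (B : {set {set T}}) (F : {set T}) :=
  [set X in B | #|X :&: F| == mrank B F].

Definition max_indep T (B : {set {set T}}) (F C : {set T}) :=
  exists2 Y, Y \in max_bases B F & C \subset Y.

Section MaxBases.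
Variables (T : finType) (E : {set T}) (B : {set {set T}}).
Hypothesis HB : is_matroid E B.
Variable n : nat.
Hypothesis card_basis : forall X, X \in B -> #|X| = n.
Variable F : {set T}.
Local Notation G := (max_bases B F).

Lemma max_basesP X : reflect (X \in B /\ #|X :&: F| = mrank B F) (X \in G).
Proof. by rewrite inE; apply: (iffP andP) => -[? /eqP]. Qed.

Lemma max_basis_exists : exists X, X \in G.
Proof. by have [Y hY e] := mrank_attained HB F; exists Y; apply/max_basesP. Qed.

Lemma max_bases_le X Y : X \in B -> Y \in G -> #|Y :&: F| <= #|X :&: F| -> X \in G.
Proof.
move=> hX /max_basesP[hY eY] le; apply/max_basesP; split => //.
by apply/eqP; rewrite eqn_leq mrank_ge_basis // -eY.
Qed.

Lemma max_bases_sub X Y : X \in B -> Y \in G -> Y :&: F \subset X -> X \in G.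
Proof.
move=> hX hY s; apply: (max_bases_le hX hY); apply: subset_leq_card.
by rewrite subsetI s subsetIr.
Qed.

(* An exchange moving [Y2 :&: F] towards [Y1 :&: F] must drop an element of [F],
   as [|Y2 :&: F|] is already maximal; so it leaves [Y2 :\: F] unchanged. *)
Lemma max_bases_glue Y1 Y2 : Y1 \in G -> Y2 \in G -> (Y1 :&: F) :|: (Y2 :\: F) \in G.
Proof.
move=> h1; set I1 := Y1 :&: F; have /max_basesP [hB1 cI1] := h1.
move: {2}(#|I1| - #|Y2 :&: I1|) (erefl (#|I1| - #|Y2 :&: I1|)) => d.
elim: d Y2 => [|d IH] Y2 hd h2; have /max_basesP [hB2 c2] := h2.
  have e : Y2 :&: I1 = I1 by apply/eqP; rewrite eqEcard subsetIr; lia.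
  have sI : I1 \subset Y2 :&: F by rewrite subsetI -{1}e subsetIl subsetIr.
  have -> : I1 = Y2 :&: F by apply/eqP; rewrite eqEcard sI /= c2 cI1.
  by rewrite setID.
have e1 : Y1 :&: I1 = I1 by rewrite /I1 setIA setIid.
have hlt : #|Y2 :&: I1| < #|Y1 :&: I1| by rewrite e1; lia.
have [x [y [xY2 xI /setIP[yY1 yI] yY2 hs]]] := basis_augment HB hB2 hB1 hlt.
have yF : y \in F by move: yI; rewrite inE => /andP[].
have cF := card_swapI F xY2 yY2.
have xF : x \in F.
  apply: contraT => xF; rewrite (negbTE xF) yF addn0 addn1 c2 in cF.
  by have := mrank_ge_basis F hs; rewrite cF ltnn.
rewrite xF yF in cF.
have cI := card_swapI I1 xY2 yY2; rewrite (negbTE xI) yI in cI.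
have hsG : swap Y2 x y \in G.
  by apply/max_basesP; split; rewrite // -c2; apply/eqP; rewrite -(eqn_add2r true) cF.
have -> : Y2 :\: F = swap Y2 x y :\: F.
  apply/setP => z; rewrite !inE.
  case: (eqVneq z y) => [->|_]; first by rewrite yF.
  by case: (eqVneq z x) => [->|_]; rewrite ?xF ?orbF.
by apply: IH hsG; rewrite addn0 addn1 in cI; rewrite cI subnS hd.
Qed.

Lemma basis_sub_setU1 (X Z : {set T}) e e' : X \in B -> Z \in B -> e \in X -> e' \notin X ->
  e \notin Z -> Z \subset e' |: X -> Z = swap X e e'.
Proof.
move=> hX hZ eX e'X eZ sZ; apply/eqP; rewrite eqEcard card_swap //.
rewrite (card_basis hX) (card_basis hZ) leqnn andbT.
apply/subsetP => z zZ; rewrite in_swap; move: (subsetP sZ z zZ); rewrite !inE.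
by case/orP=> [->//|->]; rewrite andbT; apply/orP; right; apply: contraNneq eZ => <-.
Qed.

Lemma max_basis_in_setU1 (X Z1 : {set T}) e' : X \in G -> Z1 \in G ->
  X :&: F \subset Z1 \/ X :\: F \subset Z1 /\ e' \in F ->
  exists Z, [/\ Z \in G, Z1 :&: (e' |: X) \subset Z & Z \subset e' |: X].
Proof.
move=> hX hZ1 XZ1; have /max_basesP [hXB cX] := hX; have /max_basesP [hZ1B _] := hZ1.
set S := e' |: X.
have cXS : #|X :&: S| = n by rewrite (setIidPl (subsetUr _ _)) (card_basis hXB).
have [|Z [hZ sZ1Z _ _ cZ]] := basis_interpolate HB hZ1B hXB (v := #|X :&: S|) (S := S).
  by rewrite leqnn andbT cXS -(card_basis hZ1B); apply/subset_leq_card/subsetIl.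
have ZS : Z \subset S.
  have /eqP <- : Z :&: S == Z by rewrite eqEcard subsetIl cZ cXS (card_basis hZ) leqnn.
  exact: subsetIr.
exists Z; split => //; case: XZ1 => [sXF|[sXF e'F]].
  apply: (max_bases_sub hZ hX); apply: subset_trans sZ1Z; rewrite subsetI sXF.
  exact/(subset_trans (subsetIl _ _))/subsetUr.
apply: (max_bases_le hZ hX).
have ZXF : #|Z :\: F| <= #|X :\: F|.
  apply/subset_leq_card/subsetP => z; rewrite !inE => /andP[zF zZ].
  rewrite zF; move: (subsetP ZS z zZ); rewrite !inE => /orP[/eqP ze'|->//].
  by rewrite ze' e'F in zF.
have := cardsID F Z; have := cardsID F X; rewrite (card_basis hZ) (card_basis hXB).
by move: ZXF; clear; lia.
Qed.

(* The max basis inside [e' |: X] containing [C :\ e] misses [e], since [C] is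
   not max-independent; so it is [swap X e e']. *)
Lemma max_bases_circuit_exchange (C X : {set T}) e e' : e != e' -> e \in C -> e' \in C ->
  ~ max_indep B F C -> max_indep B F (C :\ e) ->
  X \in G -> C :\ e' \subset X -> C \subset F \/ [disjoint C & F] ->
  [/\ e \in X, e' \notin X & swap X e e' \in G].
Proof.
move=> ee' eC e'C notC [Z0 hZ0 sZ0] hX sX hCF.
have eX : e \in X by apply: (subsetP sX); rewrite !inE eC ee'.
have e'X : e' \notin X.
  apply: contra_notN notC => e'X; exists X => //; apply/subsetP => z zC.
  by case: (eqVneq z e') => [->//|ze']; rewrite (subsetP sX) // !inE ze'.
split => //.
have [Z1 [hZ1 sZ1 XZ1]] : exists Z1, [/\ Z1 \in G, C :\ e \subset Z1 &
      X :&: F \subset Z1 \/ X :\: F \subset Z1 /\ e' \in F].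
  case: hCF => hCF.
    exists ((Z0 :&: F) :|: (X :\: F)); split; first exact: max_bases_glue.
      apply/subsetP => z zC; rewrite !inE (subsetP sZ0 _ zC).
      by move: zC; rewrite inE => /andP[_ /(subsetP hCF) ->].
    by right; split; [exact: subsetUr | exact: (subsetP hCF)].
  exists ((X :&: F) :|: (Z0 :\: F)); split; [exact: max_bases_glue| |by left; exact: subsetUl].
  apply/subsetP => z zC; rewrite !inE (subsetP sZ0 _ zC) andbT; apply/orP; right.
  by move: zC; rewrite inE => /andP[_ zC]; rewrite (disjointFr hCF zC).
have [Z [hZ sZ1Z ZS]] := max_basis_in_setU1 hX hZ1 XZ1.
have sCZ : C :\ e \subset Z.
  apply: subset_trans sZ1Z; rewrite subsetI sZ1 /=.
  apply/subsetP => z; rewrite inE => /andP[ze zC].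
  rewrite !inE; case: (eqVneq z e') => [//|ze'].
  by rewrite (subsetP sX) ?orbT // !inE ze' zC.
have eZ : e \notin Z.
  apply: contra_notN notC => eZ; exists Z => //.
  by apply/subsetP => z zC; case: (eqVneq z e) => [->//|ze]; rewrite (subsetP sCZ) // !inE ze.
have /max_basesP [hXB _] := hX; have /max_basesP [hZB _] := hZ.
by rewrite -(basis_sub_setU1 hXB hZB eX e'X eZ ZS).
Qed.
End MaxBases.

Section AffineCount.
Variables (R : realType) (T : finType).
Local Open Scope ring_scope.

Definition neg_ind (F : {set T}) (e : T) : R := if e \in F then -1 else 0.

Lemma aff_eval_neg_ind (F X : {set T}) (r : nat) :
  aff_eval (neg_ind F) r%:R X = r%:R - #|X :&: F|%:R.
Proof.
rewrite /aff_eval addrC; congr (_ + _).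
rewrite -big_mkcondr /= (eq_bigl (fun e => e \in X :&: F)); last by move=> e; rewrite inE.
by rewrite sumr_const mulNrn.
Qed.

Lemma aff_nvalues_neg_ind (B : {set {set T}}) (F : {set T}) (r : nat) :
  aff_nvalues B (neg_ind F) r%:R = size (undup [seq #|X :&: F| | X <- enum B]).
Proof.
rewrite /aff_nvalues.
have -> : [seq aff_eval (neg_ind F) r%:R X | X <- enum B] =
    [seq r%:R - m%:R | m <- [seq #|X :&: F| | X <- enum B]].
  by rewrite -map_comp; apply: eq_map => X; rewrite aff_eval_neg_ind.
rewrite undup_map_inj ?size_map // => x y /= /addrI /oppr_inj /eqP.
by rewrite eqr_nat => /eqP.
Qed.

Lemma aff_eval_swap (a : T -> R) b (X : {set T}) e e' : e \in X -> e' \notin X ->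
  aff_eval a b (swap X e e') = aff_eval a b X - a e + a e'.
Proof.
move=> eX e'X; have e'Xe : e' \notin X :\ e by rewrite !inE (negbTE e'X) andbF.
rewrite /aff_eval /swap setUC (big_setU1 _ e'Xe) /= (big_setD1 e eX) /=; ring.
Qed.

Lemma aff_eval_swap_eq (a : T -> R) b (X : {set T}) e e' : e \in X -> e' \notin X ->
  aff_eval a b X = 0 -> aff_eval a b (swap X e e') = 0 -> a e = a e'.
Proof.
move=> eX e'X h0; rewrite aff_eval_swap // h0 sub0r addrC => /eqP.
by rewrite subr_eq0 eq_sym => /eqP.
Qed.

Lemma sum_constant_on (a : T -> R) (A : {set T}) : {in A &, forall e e', a e = a e'} ->
  exists c, forall Y : {set T}, Y \subset A -> \sum_(e in Y) a e = #|Y|%:R * c.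
Proof.
move=> h; case: (set_0Vmem A) => [->|[e0 e0A]].
  by exists 0 => Y; rewrite subset0 => /eqP ->; rewrite big_set0 cards0 mul0r.
exists (a e0) => Y sY; rewrite mulr_natl -sumr_const; apply: eq_bigr => e eY.
by apply: h => //; apply: (subsetP sY).
Qed.

Variables (B : {set {set T}}) (F A : {set T}) (n r : nat).
Hypothesis outside_sub : forall X, X \in B -> X :\: F \subset A.
Hypothesis card_B : forall X, X \in B -> #|X| = n.
Hypothesis count_le : forall X, X \in B -> (#|X :&: F| <= r)%N.
Hypothesis count_eq : exists2 X, X \in B & #|X :&: F| = r.
Hypothesis count_lt : exists2 X, X \in B & (#|X :&: F| < r)%N.

Lemma aff_vanishing_proportional (a : T -> R) b :
  {in F &, forall e e', a e = a e'} -> {in A &, forall e e', a e = a e'} ->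
  (forall X, X \in B -> #|X :&: F| = r -> aff_eval a b X = 0) ->
  exists c, forall X, X \in B -> aff_eval a b X = (r%:R - #|X :&: F|%:R) * c.
Proof.
move=> constF constA h0.
have [al hal] := sum_constant_on constF; have [be hbe] := sum_constant_on constA.
have evalE X : X \in B -> aff_eval a b X =
    #|X :&: F|%:R * al + (n%:R - #|X :&: F|%:R) * be + b.
  move=> hX; rewrite /aff_eval (big_setID F) /= hal ?subsetIr // hbe ?outside_sub //.
  by rewrite -(card_B hX) -(cardsID F X) natrD; ring.
have [X1 hX1 c1] := count_eq.
have := h0 _ hX1 c1; rewrite evalE // c1 => z.
exists (be - al) => X hX; rewrite evalE //.
by apply/eqP; rewrite -subr_eq0 -z; apply/eqP; ring.
Qed.

Hypothesis vanishing_constant : forall (a : T -> R) b,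
  (forall X, X \in B -> #|X :&: F| = r -> aff_eval a b X = 0) ->
  {in F &, forall e e', a e = a e'} /\ {in A &, forall e e', a e = a e'}.

Lemma neg_ind_facet_defining : facet_defining B (neg_ind F) r%:R.
Proof.
have nonneg : aff_nonneg B (neg_ind F) r%:R.
  by move=> X hX; rewrite aff_eval_neg_ind subr_ge0 ler_nat count_le.
have faceE X : (X \in zero_face B (neg_ind F) r%:R) = (X \in B) && (#|X :&: F| == r).
  by rewrite inE aff_eval_neg_ind subr_eq0 eq_sym eqr_nat.
split => //; split; first by exists (neg_ind F), r%:R.
  have [X hX lt] := count_lt; apply/eqP => e.
  by have := faceE X; rewrite e hX ltn_eqF.
move=> _ [a [b [_ ->]]] ne sub.
have h0 X : X \in B -> #|X :&: F| = r -> aff_eval a b X = 0.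
  by move=> hX cX; have := subsetP sub X; rewrite faceE hX cX eqxx inE hX => /(_ isT) /eqP.
have [constF constA] := vanishing_constant h0.
have [c hc] := aff_vanishing_proportional constF constA h0.
have c0 : c != 0.
  apply: contra_neq ne => c0; apply/setP => X; rewrite inE.
  by case: (boolP (X \in B)) => //= hX; rewrite hc // c0 mulr0 eqxx.
apply/setP => X; rewrite faceE inE; case: (boolP (X \in B)) => //= hX.
by rewrite hc // mulf_eq0 (negbTE c0) orbF subr_eq0 eq_sym eqr_nat.
Qed.

End AffineCount.

Section Levelness.
Variables (R : realType) (T : finType) (B : {set {set T}}).
Local Open Scope ring_scope.

Lemma level_bound_card : level_bound R B #|B|.
Proof.
move=> a b _; rewrite /aff_nvalues; apply: leq_trans (size_undup _) _.
by rewrite size_map cardE.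
Qed.

Lemma levelness_exists : exists j, levelness R B j.
Proof.
elim/ltn_ind: #|B| (level_bound_card) => m IH hm.
have [[j [jm hj]]|hno] := classic (exists j, (j < m)%N /\ level_bound R B j).
  exact: IH hj.
by exists m; split => // j jm hj; apply: hno; exists j.
Qed.

Lemma face_sub (H : {set {set T}}) : is_face R B H -> H \subset B.
Proof. by case=> a [b [_ ->]]; apply/subsetP => X; rewrite inE => /andP[]. Qed.

Lemma face_sub_facet (H : {set {set T}}) : is_face R B H -> H != B ->
  exists2 G, is_facet R B G & H \subset G.
Proof.
move=> hH; move: {2}(#|B| - #|H|)%N (leqnn (#|B| - #|H|)) => d.
elim: d H hH => [|d IH] H hH le ne.
  by move: ne; rewrite eqEcard face_sub //= -subn_eq0 -leqn0 le.
have [[H2 [f2 n2 s2 ne2]]|hno] :=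
  classic (exists H2, [/\ is_face R B H2, H2 != B, H \subset H2 & H2 != H]).
  have [|G fG sG] := IH H2 f2 _ n2; last by exists G; last exact: subset_trans s2 sG.
  have : H \proper H2 by rewrite properEneq s2 eq_sym ne2.
  move/proper_card; have := subset_leq_card (face_sub f2); lia.
exists H => //; split => // H2 f2 n2 s2; apply: NNPP => ne2; apply: hno.
by exists H2; split => //; apply/eqP.
Qed.

Lemma levelness_gt0 j : B != set0 -> levelness R B j -> (0 < j)%N.
Proof.
move=> /set0Pn [X hX] [lb _].
have face0 : is_face R B set0.
  exists (fun _ => 0), 1; split; first by move=> Y _; rewrite /aff_eval big1 // add0r ler01.
  by apply/setP => Y; rewrite !inE /aff_eval big1 // add0r oner_eq0 andbF.
have ne0 : set0 != B by apply/eqP/setP => /(_ X); rewrite inE hX.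
have [G hG _] := face_sub_facet face0 ne0; have [[a [b [nn eG]]] _ _] := hG.
have hf : facet_defining B a b by split; rewrite // -eG.
apply: leq_trans (lb a b hf); rewrite /aff_nvalues lt0n size_eq0; apply/eqP => e.
have : aff_eval a b X \in undup [seq aff_eval a b Y | Y <- enum B].
  by rewrite mem_undup; apply: map_f; rewrite mem_enum.
by rewrite e.
Qed.
End Levelness.

Lemma restr_groundE (T : finType) (E F : {set T}) : F \subset E -> restr_ground E F = F.
Proof.
by move=> FE; rewrite /restr_ground /minor_ground set0U setDDr setDv set0U; apply/setIidPr.
Qed.

Lemma contr_groundE (T : finType) (E F : {set T}) : contr_ground E F = E :\: F.
Proof. by rewrite /contr_ground /minor_ground setU0. Qed.

Section Minors.
Variables (T : finType) (E : {set T}) (B : {set {set T}}).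
Hypothesis HB : is_matroid E B.
Variable n : nat.
Hypothesis card_basis : forall X, X \in B -> #|X| = n.

Lemma in_restr_bases (F X : {set T}) : F \subset E ->
  (X \in restr_bases E B F) = [&& X \subset F, mrank B X == #|X| & mrank B F == #|X|].
Proof.
move=> FE; rewrite inE -/(restr_ground E F) restr_groundE // setU0 mrank_set0 addn0.
by rewrite setDDr setDv set0U (setIidPr FE).
Qed.

Lemma in_contr_bases (F X : {set T}) : (X \in contr_bases E B F) =
  [&& X \subset E :\: F, mrank B (X :|: F) == #|X| + mrank B F & n == #|X| + mrank B F].
Proof. by rewrite inE -/(contr_ground E F) contr_groundE setD0 (mrank_ground HB card_basis). Qed.

Lemma restr_bases_indep (F C : {set T}) : F \subset E -> C \subset F ->
  indep (restr_bases E B F) C <-> max_indep B F C.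
Proof.
move=> FE CF; split.
  case/existsP => Y /andP[]; rewrite in_restr_bases // => /and3P[YF /eqP r1 /eqP r2] sCY.
  have [Z hZ sZ] := full_rank_sub_basis HB (eq_leq (esym r1)).
  exists Z; last exact: subset_trans sZ.
  apply/max_basesP; split => //; apply/eqP; rewrite eqn_leq mrank_ge_basis // r2.
  by apply: subset_leq_card; rewrite subsetI sZ.
case=> Y /max_basesP [hYB cY] sCY; apply/existsP; exists (Y :&: F).
rewrite subsetI sCY CF andbT in_restr_bases // subsetIr -cY eqxx andbT /=.
rewrite eqn_leq mrank_le_card /= andbT.
by have := mrank_ge_basis (Y :&: F) hYB; rewrite setIA setIid.
Qed.

Lemma contr_bases_indep (F C : {set T}) : C \subset E :\: F ->
  indep (contr_bases E B F) C <-> max_indep B F C.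
Proof.
move=> CEF; split.
  case/existsP => X /andP[]; rewrite in_contr_bases => /and3P[XEF /eqP r1 /eqP r2] sCX.
  have [Z hZ eZ] := mrank_attained HB (X :|: F).
  have c1 : #|Z :&: (X :|: F)| <= #|Z :&: X| + #|Z :&: F|.
    by rewrite setIUr; apply: leq_card_setU.
  have c2 : #|Z :&: X| <= #|X| by apply/subset_leq_card/subsetIr.
  have c3 := mrank_ge_basis F hZ.
  have eX : #|Z :&: X| = #|X| by lia.
  exists Z; first by apply/max_basesP; split => //; lia.
  apply: subset_trans sCX _.
  have /eqP <- : Z :&: X == X by rewrite eqEcard subsetIr eX leqnn.
  exact: subsetIl.
case=> Y /max_basesP [hYB cY] sCY; apply/existsP; exists (Y :\: F).
have c := cardsID F Y; rewrite (card_basis hYB) in c.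
have rY : mrank B (Y :\: F :|: F) = n.
  apply/eqP; rewrite eqn_leq mrank_le_rank //= -(card_basis hYB).
  have sY : Y \subset Y :\: F :|: F by apply/subsetP => z zY; rewrite !inE zY andbT orNb.
  by have := mrank_ge_basis (Y :\: F :|: F) hYB; rewrite (setIidPl sY).
have -> : C \subset Y :\: F.
  by apply/subsetP => z zC; move: (subsetP CEF z zC); rewrite !inE (subsetP sCY z zC) => /andP[->].
by rewrite in_contr_bases setSD ?(basis_sub_ground HB hYB) //= rY -cY addnC c !eqxx.
Qed.

Lemma deletion_bases (f : T) (W : {set T}) : W \in B -> f \notin W ->
  minor_bases E B set0 [set f] = [set X in B | f \notin X].
Proof.
move=> hW fW.
have sWEf : W \subset E :\ f.
  apply/subsetP => z zW; rewrite !inE (subsetP (basis_sub_ground HB hW)) // andbT.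
  by apply: contraNneq fW => <-.
have rEf : mrank B (E :\ f) = n.
  apply/eqP; rewrite eqn_leq mrank_le_rank //=.
  by have := mrank_ge_basis (E :\ f) hW; rewrite (setIidPl sWEf) (card_basis hW).
apply/setP => X; rewrite !inE /minor_ground set0U setU0 mrank_set0 addn0 rEf; apply/and3P/andP.
  case=> sX /eqP r1 /eqP r2.
  have [Y hY sXY] := full_rank_sub_basis HB (eq_leq (esym r1)).
  have /eqP eXY : X == Y by rewrite eqEcard sXY (card_basis hY) r2 leqnn.
  by subst Y; split=> //; apply: contra (subsetP sX f) _; rewrite !inE eqxx.
case=> hX fX; split; rewrite ?(mrank_basis card_basis hX) ?(card_basis hX) //.
apply/subsetP => z zX; rewrite !inE (subsetP (basis_sub_ground HB hX)) // andbT.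
by apply: contraNneq fX => <-.
Qed.

Lemma mrank_set1 (f : T) (X : {set T}) : X \in B -> f \in X -> mrank B [set f] = 1.
Proof.
move=> hX fX; apply/eqP; rewrite eqn_leq -{1}(cards1 f) mrank_le_card /=.
by have := mrank_ge_basis [set f] hX; rewrite (setIidPr _) ?sub1set // cards1.
Qed.

Lemma contraction_basis_setU1 (f : T) (X W : {set T}) : W \in B -> f \in W ->
  X \in minor_bases E B [set f] set0 -> f \notin X /\ f |: X \in B.
Proof.
move=> hW fW; rewrite inE /minor_ground setU0 setD0 (mrank_ground HB card_basis) (mrank_set1 hW fW).
case/and3P => sX /eqP r1 /eqP r2.
have fX : f \notin X by apply: contra (subsetP sX f) _; rewrite !inE eqxx.
have cU : #|f |: X| = #|X| + 1 by rewrite cardsU1 fX addnC.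
have [|Y hY sXY] := full_rank_sub_basis HB (S := f |: X); first by rewrite cU setUC r1.
suff -> : f |: X = Y by [].
by apply/eqP; rewrite eqEcard sXY (card_basis hY) cU r2 leqnn.
Qed.

Lemma contraction_basis_of (f : T) (X : {set T}) : X \in B -> f \in X ->
  X :\ f \in minor_bases E B [set f] set0.
Proof.
move=> hX fX; rewrite inE /minor_ground setU0 setD0 (mrank_ground HB card_basis) (mrank_set1 hX fX).
have cX : n = #|X :\ f| + 1 by rewrite -(card_basis hX) (cardsD1 f X) fX addnC.
rewrite setUC setD1K // (mrank_basis card_basis hX) -cX eqxx !andbT.
exact: setSD (basis_sub_ground HB hX).
Qed.

End Minors.

Lemma card_setI_D1 (T : finType) (F Z : {set T}) f : f \in F ->
  #|Z :&: F| = (f \in Z) + #|Z :&: (F :\ f)|.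
Proof.
move=> fF; rewrite (cardsD1 f (Z :&: F)) !inE fF andbT; congr (_ + _); apply: eq_card => z.
by rewrite !inE andbCA.
Qed.

Lemma card_setD1I (T : finType) (F Z : {set T}) f : f \in F -> f \in Z ->
  #|(Z :\ f) :&: (F :\ f)| + 1 = #|Z :&: F|.
Proof.
move=> fF fZ; rewrite [RHS](card_setI_D1 _ fF) fZ addnC; congr (_ + _); apply: eq_card => z.
by rewrite !inE; case: (z == f); rewrite /= ?andbF.
Qed.

Definition circuit_link (T : finType) (E : {set T}) (B : {set {set T}}) (F : {set T})
    (f : T) (through : bool) (x y : T) :=
  exists C, [/\ circuit (restr_ground E F) (restr_bases E B F) C, x \in C, y \in C
              & (f \in C) = through].

Section CircuitLinks.
Variables (T : finType) (E : {set T}) (B : {set {set T}}).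
Hypothesis HB : is_matroid E B.
Variable n : nat.
Hypothesis card_basis : forall X, X \in B -> #|X| = n.
Variable F : {set T}.
Hypothesis FE : F \subset E.
Hypothesis restr_connected : connected (restr_ground E F) (restr_bases E B F).
Hypothesis contr_connected : connected (contr_ground E F) (contr_bases E B F).
Local Notation G := (max_bases B F).

Let restr_ground_in z : z \in F -> z \in restr_ground E F.
Proof. by rewrite restr_groundE. Qed.

Let contr_ground_in z : z \in E :\: F -> z \in contr_ground E F.
Proof. by rewrite contr_groundE. Qed.

Lemma restr_circuit_max_indep C : circuit (restr_ground E F) (restr_bases E B F) C ->
  [/\ C \subset F, ~ max_indep B F C & forall x, x \in C -> max_indep B F (C :\ x)].
Proof.
rewrite /circuit restr_groundE // => /and3P[CF nC /forallP hC]; split => //.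
  by move/(restr_bases_indep HB FE CF); apply/negP.
move=> x xC; have := hC (C :\ x); rewrite properD1 //= => /(restr_bases_indep HB FE).
by apply; rewrite (subset_trans (subsetDl _ _)).
Qed.

Lemma contr_circuit_max_indep C : circuit (contr_ground E F) (contr_bases E B F) C ->
  [/\ C \subset E :\: F, ~ max_indep B F C & forall x, x \in C -> max_indep B F (C :\ x)].
Proof.
rewrite /circuit contr_groundE => /and3P[CF nC /forallP hC]; split => //.
  by move/(contr_bases_indep HB card_basis CF); apply/negP.
move=> x xC; have := hC (C :\ x); rewrite properD1 //= => /(contr_bases_indep HB card_basis).
by apply; rewrite (subset_trans (subsetDl _ _)).
Qed.

Lemma max_bases_swap_outside (Q : {set T}) x y : Q \in G ->
  x \in E :\: F -> y \in E :\: F -> x != y ->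
  exists X, [/\ X \in G, X :&: F = Q :&: F, x \in X, y \notin X & swap X x y \in G].
Proof.
move=> hQ xEF yEF xy.
have [C [hC [xC yC]]] := contr_connected (contr_ground_in xEF) (contr_ground_in yEF) xy.
have [CEF nC hCx] := contr_circuit_max_indep hC; have [X1 hX1 sX1] := hCx y yC.
have dCF : [disjoint C & F].
  by rewrite disjoints_subset (subset_trans CEF) // setDE subsetIr.
have sCX : C :\ y \subset (Q :&: F) :|: (X1 :\: F).
  apply/subsetP => z zCy; rewrite !inE (subsetP sX1 _ zCy) andbT.
  by move: zCy; rewrite inE => /andP[_ zC]; rewrite (disjointFr dCF zC) orbT.
have [||xX yX hs] := max_bases_circuit_exchange HB card_basis xy xC yC nC (hCx x xC) _ sCX.
- exact (max_bases_glue HB hQ hX1).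
- by right.
exists ((Q :&: F) :|: (X1 :\: F)); split => //; first exact: (max_bases_glue HB hQ hX1).
by apply/setP => z; rewrite !inE; case: (z \in F); rewrite /= ?andbT ?andbF ?orbF.
Qed.

Lemma circuit_link_total f x y : x \in F -> y \in F -> x != y ->
  circuit_link E B F f false x y \/ circuit_link E B F f true x y.
Proof.
move=> xF yF xy.
have [C [hC [xC yC]]] := restr_connected (restr_ground_in xF) (restr_ground_in yF) xy.
by case fC: (f \in C); [right | left]; exists C.
Qed.

Variable f : T.
Hypothesis fF : f \in F.

Lemma max_bases_avoid e : e \in F -> e != f -> exists2 W, W \in G & f \notin W.
Proof.
move=> eF ef.
have [C [hC [eC fC]]] := restr_connected (restr_ground_in eF) (restr_ground_in fF) ef.
have [_ nC hCx] := restr_circuit_max_indep hC; have [W hW sW] := hCx f fC.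
exists W => //; apply: contra_notN nC => fW; exists W => //.
by apply/subsetP => z zC; case: (eqVneq z f) => [->//|zf]; rewrite (subsetP sW) // !inE zf.
Qed.

Lemma max_bases_swap_link_avoid x y W : W \in G -> f \notin W -> x != y ->
  circuit_link E B F f false x y ->
  exists X, [/\ X \in G, f \notin X, x \in X, y \notin X & swap X x y \in G].
Proof.
move=> hW fW xy [C [hC xC yC fC]].
have [CF nC hCx] := restr_circuit_max_indep hC; have [X1 hX1 sX1] := hCx y yC.
have /max_basesP [hX1B cX1] := hX1; have /max_basesP [hWB cW] := hW.
have cWf : #|W :&: (F :\ f)| = mrank B F by rewrite -cW (card_setI_D1 _ fF) (negbTE fW).
have [|Z [hZ sX1Z _ _ cZ]] := basis_interpolate HB hX1B hWB (S := F :\ f) (v := mrank B F).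
  by rewrite cWf leqnn andbT -cX1 (card_setI_D1 _ fF) leq_addl.
have fZ : f \notin Z.
  apply/negP => fZ; have := mrank_ge_basis F hZ.
  by rewrite (card_setI_D1 _ fF) fZ cZ add1n ltnn.
have hZG : Z \in G by apply/max_basesP; rewrite (card_setI_D1 _ fF) (negbTE fZ) cZ.
have sCZ : C :\ y \subset Z.
  apply: subset_trans sX1Z; rewrite subsetI sX1 /=.
  apply/subsetP => z; rewrite !inE => /andP[_ zC]; rewrite (subsetP CF _ zC) andbT.
  by apply: contraFneq _ fC => <-.
have [xZ yZ hs] :=
  max_bases_circuit_exchange HB card_basis xy xC yC nC (hCx x xC) hZG sCZ (or_introl CF).
by exists Z.
Qed.

Lemma max_bases_swap_link_through x y : x != y -> y != f ->
  circuit_link E B F f true x y ->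
  exists X, [/\ X \in G, f \in X, x \in X, y \notin X & swap X x y \in G].
Proof.
move=> xy yf [C [hC xC yC fC]].
have [CF nC hCx] := restr_circuit_max_indep hC; have [X1 hX1 sX1] := hCx y yC.
have fX1 : f \in X1 by apply: (subsetP sX1); rewrite !inE fC eq_sym yf.
have [xX yX hs] :=
  max_bases_circuit_exchange HB card_basis xy xC yC nC (hCx x xC) hX1 sX1 (or_introl CF).
by exists X1.
Qed.

End CircuitLinks.

Lemma size_undup_interval (s : seq nat) lo hi : lo <= hi ->
  (forall v, (v \in s) = (lo <= v <= hi)) -> size (undup s) = hi - lo + 1.
Proof.
move=> lohi hs; have : perm_eq (undup s) (iota lo (hi - lo + 1)).
  apply: uniq_perm; rewrite ?undup_uniq ?iota_uniq // => v.
  by rewrite mem_undup mem_iota hs; apply/andP/andP => -[]; split => //; lia.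
by move/perm_size ->; rewrite size_iota.
Qed.

Lemma size_undup_ge_interval (s : seq nat) lo hi : lo <= hi ->
  (forall v, lo <= v <= hi -> v \in s) -> hi - lo + 1 <= size (undup s).
Proof.
move=> lohi hs; rewrite -(size_iota lo (hi - lo + 1)).
apply: uniq_leq_size; first exact: iota_uniq.
by move=> v; rewrite mem_iota mem_undup => /andP[h1 h2]; apply: hs; apply/andP; split => //; lia.
Qed.

Definition edge_constant (U : Type) (T : finType) (V : {set T}) (D : T -> T -> Prop) :=
  forall a : T -> U, (forall x y, x \in V -> y \in V -> x != y -> D x y -> a x = a y) ->
  {in V &, forall x y, a x = a y}.

Lemma edge_constant_sub (U : Type) (T : finType) (V : {set T}) (D D' : T -> T -> Prop) :
  (forall x y, x \in V -> y \in V -> x != y -> D x y -> D' x y) ->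
  edge_constant U V D -> edge_constant U V D'.
Proof. by move=> DD' hD a ha; apply: hD => x y xV yV xy /(DD' x y xV yV xy); apply: ha. Qed.

(* The complement of a disconnected graph is connected. *)
Lemma edge_constant_complement (U : Type) (T : finType) (V : {set T}) (D : T -> T -> Prop) :
  ~ edge_constant U V D -> edge_constant U V (fun x y => ~ D x y).
Proof.
move=> nD a ha.
have [a1 h1 [u [v [uV vV uv]]]] : exists2 a1 : T -> U,
    (forall x y, x \in V -> y \in V -> x != y -> D x y -> a1 x = a1 y) &
    exists u v, [/\ u \in V, v \in V & a1 u <> a1 v].
  apply: NNPP => hn; apply: nD => a1 h1 u v uV vV; apply: NNPP => ne; apply: hn.
  by exists a1 => //; exists u, v.
have cross p q : p \in V -> q \in V -> a1 p <> a1 q -> a p = a q.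
  move=> pV qV ne; have pq : p != q by apply: contra_notN ne => /eqP ->.
  by apply: ha => // hD; apply: ne; apply: h1.
have to_u x : x \in V -> a x = a u.
  move=> xV; have [e1|] := classic (a1 x = a1 u); last exact: cross.
  by rewrite (cross x v) ?(cross u v) // e1.
by move=> x y xV yV; rewrite (to_u x xV) (to_u y yV).
Qed.

Section MinimallyLevel.
Variables (R : realType) (T : finType) (E : {set T}) (B : {set {set T}}) (k : nat).
Hypothesis Hmin : minimally_level R E B k.

Lemma minimally_level_minor_lt (C D : {set T}) (a : T -> R) b :
  is_proper_minor_pair E C D -> facet_defining (minor_bases E B C D) a b ->
  aff_nvalues (minor_bases E B C D) a b < k.
Proof.
move=> hCD hf; have [j hj] := levelness_exists R (minor_bases E B C D).
exact: leq_ltn_trans (hj.1 a b hf) (Hmin.2 C D hCD j hj).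
Qed.

Lemma minimally_level_gt1 : E != set0 -> 1 < k.
Proof.
move=> E0; have [j hj] := levelness_exists R (minor_bases E B E set0).
have hCD : is_proper_minor_pair E E set0.
  by split; [split; rewrite ?sub0set // -setI_eq0 setI0 | rewrite setU0].
apply: leq_trans (Hmin.2 _ _ hCD j hj); apply: levelness_gt0 hj.
apply/set0Pn; exists set0.
by rewrite inE sub0set set0U setD0 cards0 !add0n !eqxx.
Qed.

End MinimallyLevel.

Section Flacet.
Variables (T : finType) (E : {set T}) (B : {set {set T}}).
Hypothesis HB : is_matroid E B.
Variable n : nat.
Hypothesis card_basis : forall X, X \in B -> #|X| = n.
Variable F : {set T}.
Local Notation G := (max_bases B F).
Variable X0 : {set T}.
Hypothesis X0B : X0 \in B.
Hypothesis X0_min : forall X, X \in B -> #|X0 :&: F| <= #|X :&: F|.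

Lemma count_values_interval :
  size (undup [seq #|X :&: F| | X <- enum B]) = mrank B F - #|X0 :&: F| + 1.
Proof.
have [Y hY] := max_basis_exists HB F; have /max_basesP [hYB cY] := hY.
apply: size_undup_interval; first exact: mrank_ge_basis.
move=> v; apply/mapP/idP => [[X] | hv].
  by rewrite mem_enum => hX ->; rewrite X0_min // mrank_ge_basis.
rewrite -cY in hv; have [Z [hZ _ _ _ cZ]] := basis_interpolate HB X0B hYB hv.
by exists Z; rewrite ?mem_enum ?cZ.
Qed.

Variable f : T.
Hypothesis fF : f \in F.

Lemma deletion_values W v : W \in G -> f \notin W -> #|X0 :&: F| <= v <= mrank B F ->
  exists X, [/\ X \in B, f \notin X & #|X :&: F| = v].
Proof.
move=> hW fW /andP[h1 h2]; have /max_basesP [hWB cW] := hW.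
have cWF := cardsID F W; have cX0F := cardsID F X0.
rewrite setDE (card_basis hWB) cW in cWF; rewrite setDE (card_basis X0B) in cX0F.
have rn := mrank_le_rank card_basis F.
have [|Z [hZ _ sZW _ cZ]] := basis_interpolate HB hWB X0B (S := ~: F) (v := n - v).
  by apply/andP; split; lia.
exists Z; split => //.
  by apply: contra fW => fZ; apply: (subsetP sZW); rewrite setDE setCK inE fZ.
have := cardsID F Z; rewrite setDE (card_basis hZ) cZ; lia.
Qed.

Lemma contraction_values v : f \in X0 -> #|X0 :&: F| <= v <= mrank B F ->
  exists X, [/\ X \in B, f \in X & #|X :&: F| = v].
Proof.
move=> fX0 hv; have [Y /max_basesP [hYB cY]] := max_basis_exists HB F.
rewrite -cY in hv; have [Z [hZ sX0Z _ _ cZ]] := basis_interpolate HB X0B hYB hv.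
by exists Z; split => //; apply: (subsetP sX0Z); rewrite inE fX0 fF.
Qed.

End Flacet.

Section SingleElementMinors.
Variables (R : realType) (T : finType) (E : {set T}) (B : {set {set T}}).
Hypothesis HB : is_matroid E B.
Variable n : nat.
Hypothesis card_basis : forall X, X \in B -> #|X| = n.
Variable F : {set T}.
Hypothesis FE : F \subset E.
Hypothesis contr_connected : connected (contr_ground E F) (contr_bases E B F).
Local Notation G := (max_bases B F).
Variable f : T.
Hypothesis fF : f \in F.

Let swap_notin (X : {set T}) x y : f \notin X -> y != f -> f \notin swap X x y.
Proof. by move=> fX yf; rewrite in_swap (negbTE fX) andbF orbF eq_sym. Qed.

Let outside_ne z : z \in E :\: F -> z != f.
Proof. by apply: contraTneq => ->; rewrite inE fF. Qed.

Lemma deletion_facet (W X1 : {set T}) : W \in G -> f \notin W ->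
  X1 \in B -> f \notin X1 -> #|X1 :&: F| < mrank B F ->
  edge_constant R (F :\ f) (circuit_link E B F f false) ->
  facet_defining [set X in B | f \notin X] (neg_ind R (F :\ f)) (mrank B F)%:R.
Proof.
move=> hW fW hX1 fX1 ltX1 linked; have /max_basesP [hWB cW] := hW.
have cnt (X : {set T}) : f \notin X -> #|X :&: (F :\ f)| = #|X :&: F|.
  by move=> fX; rewrite (card_setI_D1 _ fF) (negbTE fX).
apply: (neg_ind_facet_defining (A := E :\: F) (n := n)).
- move=> X; rewrite inE => /andP[hX fX]; apply/subsetP => z; rewrite !inE => /andP[zF zX].
  have zf : z != f by apply: contraNneq fX => <-.
  by move: zF; rewrite zf (subsetP (basis_sub_ground HB hX) z zX) /= andbT.
- by move=> X; rewrite inE => /andP[/card_basis].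
- by move=> X; rewrite inE => /andP[hX fX]; rewrite cnt // mrank_ge_basis.
- by exists W; rewrite ?inE ?hWB ?cnt.
- by exists X1; rewrite ?inE ?hX1 ?cnt.
move=> a b h0.
have hz (X : {set T}) : X \in G -> f \notin X -> aff_eval a b X = 0%R.
  by move=> /max_basesP [hX cX] fX; apply: h0; rewrite ?inE ?hX ?cnt.
split.
  apply: linked => x y xF yF xy hl.
  have [X [hX fX xX yX hs]] :=
    max_bases_swap_link_avoid HB card_basis FE fF hW fW xy hl.
  have /setD1P [yf _] := yF.
  exact: aff_eval_swap_eq xX yX (hz X hX fX) (hz _ hs (swap_notin _ fX yf)).
move=> x y xA yA; have [->//|xy] := eqVneq x y.
have [X [hX XF xX yX hs]] := max_bases_swap_outside HB card_basis contr_connected hW xA yA xy.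
have fX : f \notin X.
  apply: contra fW => fX; suff : f \in X :&: F by rewrite XF => /setIP [].
  by rewrite inE fX fF.
exact: aff_eval_swap_eq xX yX (hz X hX fX) (hz _ hs (swap_notin _ fX (outside_ne yA))).
Qed.

Lemma contraction_facet (Wf X1 : {set T}) : Wf \in G -> f \in Wf ->
  X1 \in B -> f \in X1 -> #|X1 :&: F| < mrank B F ->
  edge_constant R (F :\ f) (circuit_link E B F f true) ->
  facet_defining (minor_bases E B [set f] set0) (neg_ind R (F :\ f)) (mrank B F - 1)%:R.
Proof.
move=> hWf fWf hX1 fX1 ltX1 linked; have /max_basesP [hWfB cWf] := hWf.
have cnt (Z : {set T}) : f \in Z -> #|(Z :\ f) :&: (F :\ f)| + 1 = #|Z :&: F| := card_setD1I fF.
have hB' := contraction_basis_setU1 HB card_basis hX1 fX1.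
apply: (neg_ind_facet_defining (A := E :\: F) (n := n - 1)).
- move=> X /hB' [fX hU]; apply/subsetP => z; rewrite !inE => /andP[zF zX].
  have zf : z != f by apply: contraNneq fX => <-.
  by move: zF; rewrite zf (subsetP (basis_sub_ground HB hU) z (setU1r f zX)) /= andbT.
- by move=> X /hB' [fX /card_basis]; rewrite cardsU1 fX add1n => <-; rewrite subn1.
- move=> X /hB' [fX hU]; have := cnt _ (setU11 f X); rewrite setU1K //.
  by have := mrank_ge_basis F hU; lia.
- exists (Wf :\ f); first exact: (contraction_basis_of HB card_basis hWfB fWf).
  by rewrite -cWf -(cnt _ fWf) addnK.
- exists (X1 :\ f); first exact: (contraction_basis_of HB card_basis hX1 fX1).
  by have := cnt _ fX1; lia.
move=> a b h0.
have hz (X : {set T}) : X \in G -> f \in X -> aff_eval a b (X :\ f) = 0%R.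
  move=> /max_basesP [hX cX] fX; apply: h0; first exact: (contraction_basis_of HB card_basis hX fX).
  by rewrite -cX -(cnt _ fX) addnK.
have swap_eq (X : {set T}) x y : X \in G -> f \in X -> x \in X -> y \notin X -> swap X x y \in G ->
    x != f -> y != f -> a x = a y.
  move=> hX fX xX yX hs xf yf.
  apply: (aff_eval_swap_eq (X := X :\ f)); rewrite ?inE ?xf ?(negbTE yX) ?andbF //.
    exact: hz.
  by rewrite -swap_setD1 // hz // in_swap fX andbT [f == x]eq_sym xf orbT.
split.
  apply: linked => x y xF yF xy hl.
  have /setD1P [xf _] := xF; have /setD1P [yf _] := yF.
  have [X [hX fX xX yX hs]] := max_bases_swap_link_through HB card_basis FE xy yf hl.
  exact: swap_eq hX fX xX yX hs xf yf.
move=> x y xA yA; have [->//|xy] := eqVneq x y.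
have [X [hX XF xX yX hs]] := max_bases_swap_outside HB card_basis contr_connected hWf xA yA xy.
have /setIP [fX _] : f \in X :&: F by rewrite XF inE fWf fF.
exact: swap_eq hX fX xX yX hs (outside_ne xA) (outside_ne yA).
Qed.

End SingleElementMinors.

Lemma deletion_pair (T : finType) (E : {set T}) f : f \in E -> is_proper_minor_pair E set0 [set f].
Proof.
move=> fE; split; first by split; rewrite ?sub0set ?sub1set // -setI_eq0 set0I.
by rewrite set0U; apply/set0Pn; exists f; rewrite inE.
Qed.

Lemma contraction_pair (T : finType) (E : {set T}) f :
  f \in E -> is_proper_minor_pair E [set f] set0.
Proof.
move=> fE; split; first by split; rewrite ?sub0set ?sub1set // -setI_eq0 setI0.
by rewrite setU0; apply/set0Pn; exists f; rewrite inE.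
Qed.

Section MinCount.
Variables (R : realType) (T : finType) (E : {set T}) (B : {set {set T}}).
Hypothesis HB : is_matroid E B.
Variable n : nat.
Hypothesis card_basis : forall X, X \in B -> #|X| = n.
Variable F : {set T}.
Hypothesis FE : F \subset E.
Hypothesis restr_connected : connected (restr_ground E F) (restr_bases E B F).
Hypothesis contr_connected : connected (contr_ground E F) (contr_bases E B F).
Local Notation G := (max_bases B F).
Variable X0 : {set T}.
Hypothesis X0B : X0 \in B.

Lemma deletion_nvalues_ge f (W : {set T}) : f \in F -> W \in G -> f \notin W ->
  mrank B F - #|X0 :&: F| + 1 <=
    size (undup [seq #|X :&: (F :\ f)| | X <- enum [set X in B | f \notin X]]).
Proof.
move=> fF hW fW; apply: size_undup_ge_interval (mrank_ge_basis F X0B) _ => v hv.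
have [X [hX fX cX]] := deletion_values HB card_basis X0B fF hW fW hv.
apply/mapP; exists X; first by rewrite mem_enum inE hX fX.
by rewrite -cX (card_setI_D1 _ fF) (negbTE fX).
Qed.

Lemma contraction_nvalues_ge f : f \in F -> f \in X0 ->
  mrank B F - #|X0 :&: F| + 1 <=
    size (undup [seq #|X :&: (F :\ f)| | X <- enum (minor_bases E B [set f] set0)]).
Proof.
move=> fF fX0; have lo_gt0 : 0 < #|X0 :&: F| by apply/card_gt0P; exists f; rewrite inE fX0.
have lo_le := mrank_ge_basis F X0B.
have -> : mrank B F - #|X0 :&: F| + 1 = (mrank B F - 1) - (#|X0 :&: F| - 1) + 1 by lia.
apply: size_undup_ge_interval => [|v hv]; first lia.
have [|Z [hZ fZ cZ]] := contraction_values HB X0B fF (v := v.+1) fX0; first lia.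
apply/mapP; exists (Z :\ f); first by rewrite mem_enum (contraction_basis_of HB card_basis hZ fZ).
by have := card_setD1I fF fZ; rewrite cZ addn1 => -[].
Qed.

Variable k : nat.
Hypothesis Hmin : minimally_level R E B k.
Hypothesis kE : k = mrank B F - #|X0 :&: F| + 1.
Hypothesis k_gt1 : 1 < k.

Lemma min_count_eq0 : #|X0 :&: F| = 0.
Proof.
apply/eqP; apply: contraT; rewrite -lt0n => lo_gt0.
have /card_gt0P [f /setIP [fX0 fF]] := lo_gt0.
have fE : f \in E := subsetP FE f fF.
have lo_lt : #|X0 :&: F| < mrank B F by lia.
have [e /setD1P [ef eF]] : exists e, e \in F :\ f.
  apply/set0Pn; rewrite -card_gt0; have := cardsD1 f F; have := mrank_le_card B F.
  by rewrite fF; lia.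
have [W hW fW] := max_bases_avoid HB FE restr_connected fF eF ef.
have /max_basesP [hWB _] := hW.
have [|X1 [hX1 fX1 cX1]] := deletion_values HB card_basis X0B fF hW fW (v := #|X0 :&: F|).
  by rewrite leqnn ltnW.
have [linked|unlinked] := classic (edge_constant R (F :\ f) (circuit_link E B F f false)).
  have hf := deletion_facet HB card_basis FE contr_connected fF hW fW hX1 fX1 _ linked.
  rewrite cX1 -(deletion_bases HB card_basis hWB fW) in hf; have := hf lo_lt.
  move/(minimally_level_minor_lt Hmin (deletion_pair fE)).
  rewrite (deletion_bases HB card_basis hWB fW) aff_nvalues_neg_ind kE ltnNge.
  by rewrite (deletion_nvalues_ge fF hW fW).
have linked : edge_constant R (F :\ f) (circuit_link E B F f true).
  apply: edge_constant_sub (edge_constant_complement unlinked).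
  move=> x y /setD1P [_ xF] /setD1P [_ yF] xy.
  by case: (circuit_link_total FE restr_connected f xF yF xy).
have [|Wf [hWfB fWf cWf]] := contraction_values HB X0B fF (v := mrank B F) fX0.
  by rewrite leqnn ltnW.
have hWf : Wf \in G by apply/max_basesP.
have := contraction_facet HB card_basis FE contr_connected fF hWf fWf X0B fX0 lo_lt linked.
move/(minimally_level_minor_lt Hmin (contraction_pair fE)).
by rewrite aff_nvalues_neg_ind kE ltnNge (contraction_nvalues_ge fF fX0).
Qed.

End MinCount.

Theorem proposition6p6 (R : realType) (T : finType) (E : {set T})
    (B : {set {set T}}) (k : nat) (F : {set T}) :
  is_matroid E B ->
  minimally_level R E B k ->
  flacet E B F ->
  flacet_nvalues B F = k ->
  mrank B F = (k - 1)%N.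
Proof.
move=> HB Hmin [[FE _] F0 _ restr_connected contr_connected] Hk.
have [X hX] := basis_exists HB.
have card_basis Y : Y \in B -> #|Y| = #|X| by move=> hY; apply: (card_bases_eq HB hY hX).
have [X0 X0B X0_min] := arg_minnP (fun Y => #|Y :&: F|) hX.
have kE : k = mrank B F - #|X0 :&: F| + 1.
  by rewrite -Hk /flacet_nvalues (count_values_interval HB X0B X0_min).
have k_gt1 : 1 < k.
  apply: minimally_level_gt1 Hmin _; case/set0Pn: F0 => x xF.
  by apply/set0Pn; exists x; apply: (subsetP FE).
have := min_count_eq0 HB card_basis FE restr_connected contr_connected X0B Hmin kE k_gt1.
lia.
Qed.
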